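(* Let $G$ be an abelian Hausdorff topological group in which every cyclic subgroup is discrete. The following are equivalent: (i) $G$ contains an infinite absolutely Cauchy summable set; (ii) $G$ contains a subgroup topologically isomorphic to $S_A$ for some infinite subset $A$ of $G\setminus\{0\}$.
   Context: For $a\in G$, $\langle a\rangle$ is the cyclic subgroup generated by $a$ with the subspace topology. For $A\subseteq G\setminus\{0\}$, $S_A=\bigoplus_{a\in A}\langle a\rangle$ is the subgroup of finitely supported elements of the product $\prod_{a\in A}\langle a\rangle$, with the subspace topology of the Tychonoff product topology. $A\subseteq G$ is absolutely Cauchy summable if for every neighbourhood $U$ of $0$ there is a finite $F\subseteq A$ such that the subgroup generated by $A\setminus F$ is contained in $U$. *)

From HB Require Import structures.
From mathcomp Require Import all_boot all_order all_algebra.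
From mathcomp Require Import all_classical all_reals all_analysis.
Set Implicit Arguments. Unset Strict Implicit. Unset Printing Implicit Defensive.
Import Order.TTheory GRing.Theory Num.Theory.
Local Open Scope classical_set_scope.
Local Open Scope ring_scope.

Section Defs.
Variable G : topologicalZmodType.

Definition is_subgroup (H : set G) : Prop :=
  H 0 /\ (forall x y, H x -> H y -> H (x - y)).

Definition gen_subgroup (S : set G) : set G :=
  \bigcap_(H in [set H : set G | is_subgroup H /\ S `<=` H]) H.

Definition cyclic_subgroup (a : G) : set G := [set a *~ n | n in [set: int]].

Definition discrete_subspace (C : set G) : Prop :=
  forall x : subspace C, nbhs x = principal_filter x.

Definition abs_cauchy_summable (A : set G) : Prop :=
  forall U : set G, nbhs (0 : G) U ->
    exists F : set G, [/\ finite_set F, F `<=` A & gen_subgroup (A `\` F) `<=` U].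

Definition prodA (A : set G) := {ptws {a : G | A a} -> G}.

(* S_A : finitely supported elements of prod_{a in A} <a>, as a subset of prodA *)
Definition S_A (A : set G) : set (prodA A) :=
  [set f : prodA A | (forall i : {a : G | A a}, cyclic_subgroup (sval i) (f i))
                     /\ finite_set [set i | f i != 0]].

Arguments S_A : clear implicits.

(* G contains a subgroup topologically isomorphic to S_A:
   phi is an injective homomorphism S_A -> G which is a homeomorphism
   of S_A (subspace topology) onto its image H = phi @` S_A (subspace topology). *)
Definition contains_top_iso_copy_of_S_A (A : set G) : Prop :=
  exists (phi : prodA A -> G) (psi : G -> prodA A),
    [/\ forall f g, S_A A f -> S_A A g -> phi (fun i => f i - g i : G) = phi f - phi g,
        forall f, S_A A f -> psi (phi f) = f,
        {within S_A A, continuous phi} &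
        {within phi @` S_A A, continuous psi}].
End Defs.
Arguments S_A {G} A.

(* (i) -> (ii): from an infinite absolutely Cauchy summable set B choose
   inductively distinct nonzero b_0, b_1, ... in B and neighbourhoods W_k of 0
   such that a sum of c_j in <b_j>, j < k, lies in W_k only if every c_j is 0.
   At stage k take V with V - V inside W_k, a finite F such that B minus F
   generates a subgroup inside V, pick b_k in B off F and off all earlier
   choices, and let W_(k+1) be V cut down by a neighbourhood isolating 0 in the
   discrete group <b_k>.  For A = {b_j}, the map f |-> sum_j f(b_j) embeds S_A:
   it is continuous since tails of such sums are small (absolute Cauchy
   summability) while finitely many coordinates are locally constant
   (discreteness), and its inverse is continuous by the choice of the W_k.
   (ii) -> (i): the images of the unit vectors of S_A are absolutely Cauchy
   summable, because by continuity at 0 the images of all elements of S_A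
   vanishing on a suitable finite set of coordinates stay in a given
   neighbourhood, and they form a subgroup. *)

From HB Require Import structures.
From mathcomp Require Import all_boot all_order all_algebra.
From mathcomp Require Import all_classical all_reals all_analysis.
Set Implicit Arguments. Unset Strict Implicit. Unset Printing Implicit Defensive.
Import Order.TTheory GRing.Theory Num.Theory.
Local Open Scope classical_set_scope.
Local Open Scope ring_scope.

Lemma finite_nat_bounded (X : set nat) :
  finite_set X -> exists n, forall j, X j -> (j < n)%N.
Proof.
move=> /finite_fsetP[s ->]; exists (\max_(j <- finmap.enum_fset s) j).+1 => j js.
by rewrite ltnS; apply: leq_bigmax_seq.
Qed.

Lemma infinite_image_inj (T U : Type) (A : set T) (f : T -> U) :
  {in A &, injective f} -> infinite_set A -> infinite_set (f @` A).
Proof. by move=> /inj_card_eq /eq_finite_set ->. Qed.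

Section Subgroups.
Variable G : topologicalZmodType.
Implicit Types (H S : set G) (a x y : G).

Lemma subgroup0 H : is_subgroup H -> H 0.
Proof. by case. Qed.

Lemma subgroupN H x : is_subgroup H -> H x -> H (- x).
Proof. by move=> [H0 HB] Hx; rewrite -sub0r; apply: HB. Qed.

Lemma subgroupD H x y : is_subgroup H -> H x -> H y -> H (x + y).
Proof.
by move=> HH Hx /(subgroupN HH); rewrite -[y in H (_ + y)]opprK; apply: HH.2.
Qed.

Lemma subgroup_mulrz H x n : is_subgroup H -> H x -> H (x *~ n).
Proof.
move=> HH Hx; have Hxn k : H (x *+ k).
  by elim: k => [|k IH]; [exact: subgroup0 | rewrite mulrS; apply: subgroupD].
case: n => k; first exact: Hxn.
by rewrite NegzE mulrNz; exact: subgroupN (Hxn _).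
Qed.

Lemma subgroup_sum H (I : Type) (r : seq I) (P : pred I) (c : I -> G) :
  is_subgroup H -> (forall i, P i -> H (c i)) -> H (\sum_(i <- r | P i) c i).
Proof.
move=> HH Hc; apply: (big_ind H) => //; first exact: subgroup0.
by move=> x y; apply: subgroupD.
Qed.

Lemma is_subgroup_cyclic a : is_subgroup (cyclic_subgroup a).
Proof.
split; first by exists 0 => //; rewrite mulr0z.
by move=> _ _ [n _ <-] [m _ <-]; exists (n - m) => //; rewrite mulrzBr.
Qed.

Lemma cyclic_subgroup_min H a : is_subgroup H -> H a -> cyclic_subgroup a `<=` H.
Proof. by move=> HH Ha _ [n _ <-]; apply: subgroup_mulrz. Qed.

Lemma is_subgroup_gen S : is_subgroup (gen_subgroup S).
Proof.
split=> [H [[H0 _] _] //|x y Sx Sy H [HH SH]].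
by apply: HH.2; [exact: Sx | exact: Sy].
Qed.

Lemma sub_gen_subgroup S : S `<=` gen_subgroup S.
Proof. by move=> x Sx H [_]; apply. Qed.

Lemma gen_subgroup_min S H : is_subgroup H -> S `<=` H -> gen_subgroup S `<=` H.
Proof. by move=> HH SH x; apply; split. Qed.

Lemma cyclic_sub_gen_subgroup S a : S a -> cyclic_subgroup a `<=` gen_subgroup S.
Proof.
by move=> Sa; apply: cyclic_subgroup_min (is_subgroup_gen S) (sub_gen_subgroup Sa).
Qed.

End Subgroups.

Section TopologicalGroup.
Variable G : topologicalZmodType.

Lemma nbhs0_translate (y : G) U : nbhs y U -> nbhs (0 : G) [set z | U (y + z)].
Proof.
move=> Uy; have : (fun z => y + z) @ nbhs (0 : G) --> y + 0.
  apply: (@continuous_comp _ _ _ (fun z => (y, z)) (fun x : G * G => x.1 + x.2)).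
    by apply: cvg_pair; [exact: cvg_cst | exact: cvg_id].
  exact: add_continuous.
by rewrite addr0 => /(_ U Uy).
Qed.

Lemma nbhs_translate0 (y : G) V : nbhs (0 : G) V -> nbhs y [set z | V (z - y)].
Proof.
move=> V0; have : (fun z => z - y) @ nbhs y --> y - y.
  apply: (@continuous_comp _ _ _ (fun z => (z, y)) (fun x : G * G => x.1 - x.2)).
    by apply: cvg_pair; [exact: cvg_id | exact: cvg_cst].
  exact: sub_continuous.
by rewrite subrr => /(_ V V0).
Qed.

Lemma nbhs0_sub_half (W : set G) : nbhs (0 : G) W ->
  exists2 V, nbhs (0 : G) V & forall x y, V x -> V y -> W (x - y).
Proof.
move=> W0; have : (fun x : G * G => x.1 - x.2) @ nbhs ((0 : G), (0 : G)) --> (0 : G) - 0.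
  exact: (@sub_continuous G (0, 0)).
rewrite subrr => /(_ W W0) [[P Q] /= [P0 Q0] PQW].
by exists (P `&` Q) => [|x y [Px _] [_ Qy]]; [exact: filterI | exact: (PQW (x, y))].
Qed.

Lemma discrete_cyclic_isolated (a x : G) : discrete_subspace (cyclic_subgroup a) ->
  cyclic_subgroup a x ->
  exists2 Z, nbhs x Z & forall y, Z y -> cyclic_subgroup a y -> y = x.
Proof.
move=> disc ax; have : nbhs (x : subspace (cyclic_subgroup a)) [set x].
  by rewrite disc; apply/principal_filterP.
move/(nbhs_subspace_ex _ ax) => -[Z Zx ZE]; exists Z => // y Zy ay.
by have [] : ([set x] `&` cyclic_subgroup a) y by rewrite ZE.
Qed.

End TopologicalGroup.

Section PointwiseTopology.
Variables (I : Type) (T : topologicalType).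

Lemma ptws_proj_cvg (i : I) (f : {ptws I -> T}) :
  (fun g : {ptws I -> T} => g i) @ nbhs f --> f i.
Proof.
have /cvg_sup/(_ i) fi : nbhs f --> f by apply: cvg_id.
apply: cvg_trans (cvg_app _ fi) _.
exact: (@initial_continuous _ T (fun g : {ptws I -> T} => g i)).
Qed.

Lemma cvg_ptws (F : set_system {ptws I -> T}) (f : {ptws I -> T}) : Filter F ->
  (forall i, (fun g : {ptws I -> T} => g i) @ F --> f i) -> F --> f.
Proof.
move=> FF Ff; apply/cvg_sup => i B.
rewrite (@nbhsE (initial_topology (fun g : {ptws I -> T} => g i)) f).
move=> -[U [[C oC CU] Uf] UB]; apply: filterS UB _.
rewrite -CU; apply: (Ff i); apply: open_nbhs_nbhs; split=> //.
by rewrite -CU in Uf.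
Qed.

Lemma seq_finite_witnesses (X : eqType) (Q : X -> I -> Prop) (s : seq X) :
  (forall E, E \in s -> exists i, Q E i) ->
  exists2 J : set I, finite_set J & forall E, E \in s -> exists2 i, J i & Q E i.
Proof.
elim: s => [|E s IH] Qs; first by exists set0.
have [|J fJ QJ] := IH; first by move=> E' E's; apply: Qs; rewrite inE E's orbT.
have [i QEi] := Qs E (mem_head _ _).
exists (J `|` [set i]) => [|E']; first by rewrite finite_setU; split.
rewrite inE => /orP[/eqP ->|E's]; first by exists i => //; right.
by have [j Jj QE'j] := QJ E' E's; exists j => //; left.
Qed.

Lemma nbhs_ptws_finite_coords (f : {ptws I -> T}) (P : set {ptws I -> T}) : nbhs f P ->
  exists2 J : set I, finite_set J &
    forall g : {ptws I -> T}, (forall i, J i -> g i = f i) -> P g.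
Proof.
rewrite nbhsE => -[U [[B sB BU] Uf] UP]; rewrite -BU in Uf; case: Uf => C BC Cf.
have [D sD DC] := sB _ BC.
have [|J fJ QJ] := @seq_finite_witnesses _ (fun E i => exists2 V : set T, open V &
    E = (fun g : {ptws I -> T} => g i) @^-1` V) (finmap.enum_fset D).
  by move=> E /sD /set_mem [i _ [V oV VE]]; exists i, V; rewrite // VE.
exists J => // g gf; apply: UP; rewrite -BU; exists C => //.
suff : C g by [].
rewrite -DC => E ED; have [i Ji [V oV EV]] := QJ E ED.
by move: Cf; rewrite -DC => /(_ E ED); rewrite EV /= (gf i Ji).
Qed.

End PointwiseTopology.

Lemma eq_sum_ord_eventually0 (V : zmodType) (c : nat -> V) n1 n2 :
  (forall j, (n1 <= j)%N -> c j = 0) -> (forall j, (n2 <= j)%N -> c j = 0) ->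
  \sum_(j < n1) c j = \sum_(j < n2) c j.
Proof.
wlog le12 : n1 n2 / (n1 <= n2)%N.
  by move=> wlog c1 c2; case: (leqP n1 n2) => [|/ltnW] le; [|symmetry]; apply: wlog.
move=> c1 _; rewrite -!(big_mkord xpredT) (big_cat_nat (leq0n n1) le12) /=.
rewrite [X in _ + X]big_nat_cond [X in _ + X]big1 ?addr0 //.
by move=> j /andP[/andP[/c1]].
Qed.

Section FinitelySupported.
Variables (G : topologicalZmodType) (A : set G).

Lemma S_A0 : S_A A (fun _ => 0).
Proof.
split=> [i|]; first exact: subgroup0 (is_subgroup_cyclic _).
by apply: (sub_finite_set _ (finite_set0 _)) => i /=; rewrite eqxx.
Qed.

Lemma S_AB f g : S_A A f -> S_A A g -> S_A A (fun i => f i - g i).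
Proof.
move=> [cf ff] [cg fg]; split=> [i|]; first exact: (is_subgroup_cyclic _).2.
apply: (@sub_finite_set _ _ ([set i | f i != 0] `|` [set i | g i != 0])).
  by move=> i /=; case: (eqVneq (f i) 0) => [->|]; [rewrite sub0r oppr_eq0; right | left].
by rewrite finite_setU.
Qed.

Definition unit_vector (a : G) : prodA A := fun i => if sval i == a then a else 0.

Lemma unit_vectorE a (Aa : A a) : unit_vector a (exist _ a Aa) = a.
Proof. by rewrite /unit_vector /= eqxx. Qed.

Lemma S_A_unit_vector a : A a -> S_A A (unit_vector a).
Proof.
move=> Aa; split=> [i|].
  rewrite /unit_vector; case: eqP => [<-|_]; last exact: subgroup0 (is_subgroup_cyclic _).
  by exists 1 => //; rewrite mulr1z.
apply: (sub_finite_set _ (@finite_set1 _ (exist _ a Aa))) => -[x Ax] /=.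
rewrite /unit_vector /=; case: (eqVneq x a) => [xa _|]; last by rewrite eqxx.
by subst x; congr exist; apply: Prop_irrelevance.
Qed.

End FinitelySupported.
Arguments S_A0 {G A}.
Arguments unit_vector {G} A a.

Section IndependentSequences.
Variable G : topologicalZmodType.
Implicit Types (b c : nat -> G).

Definition cyclic_coeffs b c := forall j, cyclic_subgroup (b j) (c j).

Definition topologically_independent b := forall k,
  exists2 V : set G, nbhs (0 : G) V & forall c m, (k <= m)%N -> cyclic_coeffs b c ->
    V (\sum_(j < m) c j) -> forall j, (j < k)%N -> c j = 0.

Definition small_tails b := forall U : set G, nbhs (0 : G) U -> exists N,
  forall c m, cyclic_coeffs b c -> (forall j, (j < N)%N -> c j = 0) -> U (\sum_(j < m) c j).

Lemma abs_cauchy_summable_small_tails (B : set G) b :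
  injective b -> (forall j, B (b j)) -> abs_cauchy_summable B -> small_tails b.
Proof.
move=> b_inj bB Bacs U U0; have [F [fF _ genU]] := Bacs _ U0.
have [N FN] : exists N, forall j, F (b j) -> (j < N)%N.
  by apply/finite_nat_bounded/finite_preimage => // i j _ _ /b_inj.
exists N => c m bc c0; apply: genU.
apply: subgroup_sum => [|j _]; first exact: is_subgroup_gen.
have [jN|Nj] := ltnP j N; first by rewrite c0 //; exact: subgroup0 (is_subgroup_gen _).
apply: cyclic_sub_gen_subgroup (bc j); split=> // /FN.
by rewrite ltnNge Nj.
Qed.

End IndependentSequences.

Section Embedding.
Variables (G : topologicalZmodType) (b : nat -> G).
Hypothesis b_inj : injective b.
Hypothesis b_discrete : forall j, discrete_subspace (cyclic_subgroup (b j)).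
Hypothesis b_indep : topologically_independent b.
Hypothesis b_tails : small_tails b.

Local Notation A := (range b).
Local Notation S := (S_A A).

Definition range_index (j : nat) : {a : G | A a} := exist _ (b j) (imageT b j).

Lemma range_index_surj (i : {a : G | A a}) : exists j, i = range_index j.
Proof.
case: i => a Aa; have [j _ bj] := Aa; exists j; subst a.
by rewrite /range_index; congr exist; apply: Prop_irrelevance.
Qed.

Lemma range_index_inj : injective range_index.
Proof. by move=> j j' /(congr1 sval) /b_inj. Qed.

Definition support_bound (f : prodA A) : nat :=
  xget 0%N [set n | forall j, (n <= j)%N -> f (range_index j) = 0].

Definition sum_coords (f : prodA A) : G :=
  \sum_(j < support_bound f) f (range_index j).

Lemma S_A_bounded f : S f -> exists m, forall j, (m <= j)%N -> f (range_index j) = 0.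
Proof.
move=> [_ finf]; have [m fm] : exists m, forall j, f (range_index j) != 0 -> (j < m)%N.
  apply/finite_nat_bounded/(finite_preimage (B := [set i | f i != 0])) => //.
  by move=> i j _ _; apply: range_index_inj.
by exists m => j mj; apply/eqP; apply: contraTT mj => /fm; rewrite -ltnNge.
Qed.

Lemma S_A_coeffs f : S f -> cyclic_coeffs b (fun j => f (range_index j)).
Proof. by move=> [fb _] j; exact: fb (range_index j). Qed.

Lemma sum_coordsE f m : (forall j, (m <= j)%N -> f (range_index j) = 0) ->
  sum_coords f = \sum_(j < m) f (range_index j).
Proof.
move=> fm; apply: eq_sum_ord_eventually0 _ (fm).
by rewrite /support_bound; case: xgetP => [n _ //|/(_ m)].
Qed.

Lemma sum_coordsB f g : S f -> S g ->
  sum_coords (fun i => f i - g i) = sum_coords f - sum_coords g.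
Proof.
move=> /S_A_bounded[m1 fm1] /S_A_bounded[m2 gm2].
have [fm gm] : (forall j, (maxn m1 m2 <= j)%N -> f (range_index j) = 0) /\
               (forall j, (maxn m1 m2 <= j)%N -> g (range_index j) = 0).
  by split=> j; rewrite geq_max => /andP[/fm1 ? /gm2 ?].
rewrite !(sum_coordsE (m := maxn m1 m2)) ?sumrB // => j mj.
by rewrite fm ?gm ?subr0.
Qed.

Lemma sum_coords_sep k : exists2 V : set G, nbhs (0 : G) V &
  forall f g, S f -> S g -> V (sum_coords f - sum_coords g) ->
  forall j, (j < k)%N -> f (range_index j) = g (range_index j).
Proof.
have [V V0 bV] := b_indep k; exists V => // f g Sf Sg Vfg j jk.
have Sfg := S_AB Sf Sg; have [m hm] := S_A_bounded Sfg.
apply/eqP; rewrite -subr_eq0; apply/eqP; move: j jk.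
apply: (bV _ (maxn k m) (leq_maxl _ _) (S_A_coeffs Sfg)).
rewrite -(sum_coordsE (f := fun i => f i - g i)) ?sum_coordsB // => j'.
by rewrite geq_max => /andP[_ /hm].
Qed.

Lemma sum_coords_inj f g : S f -> S g -> sum_coords f = sum_coords g -> f = g.
Proof.
move=> Sf Sg fg; apply: functional_extensionality_dep => i.
have [j ->] := range_index_surj i; have [V V0 sepV] := sum_coords_sep j.+1.
by apply: sepV => //; rewrite fg subrr; apply: nbhs_singleton.
Qed.

Definition coords_of (y : G) : prodA A :=
  xget (fun _ => 0) [set f | S f /\ sum_coords f = y].

Lemma sum_coordsK f : S f -> coords_of (sum_coords f) = f.
Proof.
move=> Sf; rewrite /coords_of; case: xgetP => [g _ [Sg gf]|/(_ f)[]//].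
exact: sum_coords_inj.
Qed.

Lemma sum_coords_continuous : {within S, continuous sum_coords}.
Proof.
apply/subspace_continuousP => f Sf U Uf.
have [N tailsU] := b_tails (nbhs0_translate Uf).
have /boolp.choice[Z ZP] : forall j, exists Z, nbhs (f (range_index j)) Z /\
    forall y, Z y -> cyclic_subgroup (b j) y -> y = f (range_index j).
  move=> j; have [Z Zf ZP] := discrete_cyclic_isolated (@b_discrete j) (S_A_coeffs Sf j).
  by exists Z.
have near_f : \forall g \near f, forall j : 'I_N, Z j (g (range_index j)).
  apply: (filter_forall (F := nbhs f) (f := fun (j : 'I_N) g => Z j (g (range_index j)))).
  move=> j.
  exact: ptws_proj_cvg (ZP j).1.
apply: filterS near_f => g gZ Sg /=.
have Sgf := S_AB Sg Sf; have [m gfm] := S_A_bounded Sgf.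
suff : U (sum_coords f + (sum_coords g - sum_coords f)) by rewrite addrC subrK.
rewrite -sum_coordsB // (sum_coordsE gfm); apply: tailsU (S_A_coeffs Sgf) _ => j jN.
apply/eqP; rewrite subr_eq0; apply/eqP.
exact: (ZP j).2 (gZ (Ordinal jN)) (S_A_coeffs Sg j).
Qed.

Lemma coords_of_continuous : {within sum_coords @` S, continuous coords_of}.
Proof.
apply/subspace_continuousP => _ [f Sf <-]; rewrite /from_subspace sum_coordsK //.
apply: cvg_ptws => i; have [j ->] := range_index_surj i.
move=> U Uf; have [V V0 sepV] := sum_coords_sep j.+1.
apply: filterS (nbhs_translate0 (sum_coords f) V0) => y Vy [g Sg gy]; subst y.
by rewrite /= sum_coordsK // (sepV g f Sg Sf Vy j (ltnSn j)); exact: nbhs_singleton.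
Qed.

Theorem S_A_range_embedding : contains_top_iso_copy_of_S_A (range b).
Proof.
exists sum_coords, coords_of; split.
- exact: sum_coordsB.
- exact: sum_coordsK.
- exact: sum_coords_continuous.
- exact: coords_of_continuous.
Qed.

End Embedding.

Section IndependentLists.
Variable G : topologicalZmodType.

Definition independent_on (bl : seq G) (W : set G) : Prop :=
  forall c : nat -> G,
    (forall j, (j < size bl)%N -> cyclic_subgroup (nth 0 bl j) (c j)) ->
    W (\sum_(j < size bl) c j) -> forall j, (j < size bl)%N -> c j = 0.

Lemma independent_on_rcons (bl : seq G) (x : G) (W V Z : set G) :
  independent_on bl W -> (forall u v, V u -> V v -> W (u - v)) ->
  cyclic_subgroup x `<=` V -> (forall y, Z y -> cyclic_subgroup x y -> y = 0) ->
  independent_on (rcons bl x) (V `&` Z).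
Proof.
move=> indW VW xV xZ c bc [Vsum Zsum].
rewrite size_rcons big_ord_recr /= in Vsum Zsum.
have cx : cyclic_subgroup x (c (size bl)).
  by move: (bc (size bl)); rewrite size_rcons nth_rcons ltnn eqxx; apply.
have head0 : forall j, (j < size bl)%N -> c j = 0.
  apply: indW => [j jl|].
    by move: (bc j); rewrite size_rcons nth_rcons jl; apply; exact: ltnW.
  by have := VW _ _ Vsum (xV _ cx); rewrite addrK.
have last0 : c (size bl) = 0.
  apply: xZ _ _ cx; rewrite big1 ?add0r // in Zsum => i _.
  exact: head0.
by move=> j; rewrite size_rcons ltnS leq_eqVlt => /orP[/eqP -> | /head0].
Qed.

End IndependentLists.

Section Construction.
Variables (G : topologicalZmodType) (B : set G).
Hypothesis B_discrete : forall x, B x -> discrete_subspace (cyclic_subgroup x).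
Hypothesis B_infinite : infinite_set B.
Hypothesis B_acs : abs_cauchy_summable B.

Record stage := Stage { chosen : seq G; avoided : set G; nbhd : set G }.

Definition good_stage (s : stage) : Prop :=
  [/\ finite_set (avoided s), nbhs (0 : G) (nbhd s) & independent_on (chosen s) (nbhd s)].

Definition extends_by (x : G) (s s' : stage) : Prop := exists V F,
  [/\ chosen s' = rcons (chosen s) x, avoided s' = avoided s `|` F `|` [set x],
      nbhd s' `<=` V, (forall u v, V u -> V v -> nbhd s (u - v)) &
      [/\ gen_subgroup (B `\` F) `<=` V, B x, ~ (avoided s `|` F) x & x != 0]].

Lemma exists_extension s : good_stage s ->
  exists2 s', good_stage s' & exists x, extends_by x s s'.
Proof.
case: s => bl Fa W [/= fFa W0 indW].
have [V V0 VW] := nbhs0_sub_half W0.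
have [F [fF _ genV]] := B_acs V0.
have [x [Bx xnew]] : (B `\` (Fa `|` F `|` [set 0])) !=set0.
  by apply/infinite_setN0/infinite_setD; rewrite // !finite_setU; do !split.
have x0 : x != 0 by apply/eqP => x0; apply: xnew; right.
have xF : ~ (Fa `|` F) x by move=> ?; apply: xnew; left.
have [Z Z0 Zx] :=
  discrete_cyclic_isolated (B_discrete Bx) (subgroup0 (is_subgroup_cyclic x)).
exists (Stage (rcons bl x) (Fa `|` F `|` [set x]) (V `&` Z)); last first.
  by exists x, V, F; split=> // u [].
split=> //=; first by rewrite !finite_setU; do !split.
  exact: filterI.
apply: independent_on_rcons indW VW _ Zx; apply: subset_trans genV.
by apply: cyclic_sub_gen_subgroup; split=> // ?; apply: xF; right.
Qed.

Lemma exists_stage_sequence : exists st : nat -> stage,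
  [/\ chosen (st 0%N) = [::], forall n, good_stage (st n) &
      forall n, exists x, extends_by x (st n) (st n.+1)].
Proof.
have /boolp.choice[next nextP] : forall s, exists s',
    good_stage s -> good_stage s' /\ exists x, extends_by x s s'.
  move=> s; have [/exists_extension[s' ? ?]|] := pselect (good_stage s).
    by exists s'.
  by exists s.
pose st n := iter n next (Stage [::] set0 setT).
have st_good n : good_stage (st n).
  elim: n => [|n IH]; last exact: (nextP _ IH).1.
  by split; [exact: finite_set0 | exact: filterT | move=> c _ _ j].
by exists st; split=> // n; exact: (nextP _ (st_good n)).2.
Qed.

Section StageSequence.
Variable st : nat -> stage.
Hypothesis st0 : chosen (st 0%N) = [::].
Hypothesis st_good : forall n, good_stage (st n).
Hypothesis st_next : forall n, exists x, extends_by x (st n) (st n.+1).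

Definition chosen_elt (j : nat) : G := nth 0 (chosen (st j.+1)) j.

Lemma size_chosen n : size (chosen (st n)) = n.
Proof.
elim: n => [|n IH]; first by rewrite st0.
by have [x [V [F [-> _ _ _ _]]]] := st_next n; rewrite size_rcons IH.
Qed.

Lemma extends_by_chosen k : extends_by (chosen_elt k) (st k) (st k.+1).
Proof.
have [x xst] := st_next k; suff -> : chosen_elt k = x by [].
rewrite /chosen_elt; have [V [F [-> _ _ _ _]]] := xst.
by rewrite nth_rcons size_chosen ltnn eqxx.
Qed.

Lemma nth_chosen n j : (j < n)%N -> nth 0 (chosen (st n)) j = chosen_elt j.
Proof.
elim: n => [//|n IH]; rewrite ltnS leq_eqVlt => /orP[/eqP -> //|jn].
have [V [F [-> _ _ _ _]]] := extends_by_chosen n.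
by rewrite nth_rcons size_chosen jn IH.
Qed.

Lemma avoided_mono n m : (n <= m)%N -> avoided (st n) `<=` avoided (st m).
Proof.
elim: m => [|m IH]; first by rewrite leqn0 => /eqP ->.
rewrite leq_eqVlt => /orP[/eqP -> //|/IH nm] y /nm.
by have [V [F [_ -> _ _ _]]] := extends_by_chosen m; left; left.
Qed.

Lemma chosen_elt_fresh k j : (k <= j)%N -> ~ avoided (st k) (chosen_elt j).
Proof.
move=> kj /(avoided_mono kj); have [V [F [_ _ _ _ [_ _ fresh _]]]] := extends_by_chosen j.
by move=> ?; apply: fresh; left.
Qed.

Lemma chosen_elt_inj : injective chosen_elt.
Proof.
suff lt_neq j j' : (j < j')%N -> chosen_elt j <> chosen_elt j'.
  move=> j j' eqj.
  by case: (ltngtP j j') => [/lt_neq/(_ eqj)|/lt_neq/(_ (esym eqj))|].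
move=> jj' eqj; apply: (chosen_elt_fresh jj'); rewrite -eqj.
by have [V [F [_ -> _ _ _]]] := extends_by_chosen j; right.
Qed.

Lemma chosen_elt_in k : B (chosen_elt k).
Proof. by have [V [F [_ _ _ _ []]]] := extends_by_chosen k. Qed.

Lemma chosen_elt_neq0 k : chosen_elt k != 0.
Proof. by have [V [F [_ _ _ _ []]]] := extends_by_chosen k. Qed.

Lemma chosen_independent : topologically_independent chosen_elt.
Proof.
move=> k; have [_ W0 _] := st_good k.+1.
exists (nbhd (st k.+1)) => // c m km bc Wsum.
have [V [F [_ Fk WV VW [genV _ fresh _]]]] := extends_by_chosen k.
have notF j : (k <= j)%N -> ~ F (chosen_elt j).
  rewrite leq_eqVlt => /orP[/eqP <- ?|kj Fj]; first by apply: fresh; right.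
  by apply: (chosen_elt_fresh kj); rewrite Fk; left; right.
have tailV : V (\sum_(k <= j < m) c j).
  apply: genV; rewrite big_nat_cond; apply: subgroup_sum => [|j].
    exact: is_subgroup_gen.
  move=> /andP[/andP[kj _] _]; apply: cyclic_sub_gen_subgroup (bc j).
  by split; [exact: chosen_elt_in | exact: notF].
have headW : nbhd (st k) (\sum_(j < k) c j).
  have := VW _ _ (WV _ Wsum) tailV.
  by rewrite -!(big_mkord xpredT) (big_cat_nat (leq0n k) km) addrK.
have [_ _] := st_good k; rewrite /independent_on size_chosen; apply=> // j jk.
by rewrite nth_chosen //; exact: bc.
Qed.

End StageSequence.

Theorem exists_independent_sequence : exists b : nat -> G,
  [/\ injective b, forall j, B (b j), forall j, b j != 0 & topologically_independent b].
Proof.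
have [st [st0 st_good st_next]] := exists_stage_sequence.
exists (chosen_elt st); split.
- exact: chosen_elt_inj.
- exact: chosen_elt_in.
- exact: chosen_elt_neq0.
- exact: chosen_independent.
Qed.

End Construction.

Section Converse.
Variables (G : topologicalZmodType) (A : set G) (phi : prodA A -> G).
Hypothesis phiB : forall f g, S_A A f -> S_A A g ->
  phi (fun i => f i - g i) = phi f - phi g.

Lemma hom_S_A0 : phi (fun _ => 0) = 0.
Proof.
transitivity (phi (fun i => (fun _ => 0 : G) i - (fun _ => 0 : G) i)).
  by congr phi; apply: functional_extensionality_dep => i; rewrite subrr.
by rewrite phiB ?subrr //; exact: S_A0.
Qed.

Lemma unit_vector_image_acs : {within S_A A, continuous phi} ->
  abs_cauchy_summable [set phi (unit_vector A a) | a in A].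
Proof.
move=> phi_cont U U0.
have := (subspace_continuousP _ _).1 phi_cont _ S_A0 U.
rewrite /from_subspace /= hom_S_A0 => /(_ U0) nearU.
have [J finJ JU] := nbhs_ptws_finite_coords nearU.
exists [set phi (unit_vector A (sval i)) | i in J]; split.
- exact: finite_image.
- by move=> _ [i _ <-]; exists (sval i) => //; exact: svalP.
pose K := [set y | exists2 f, S_A A f /\ (forall i, J i -> f i = 0) & phi f = y].
have K_subgroup : is_subgroup K.
  split; first by exists (fun _ => 0); [split=> //; exact: S_A0 | exact: hom_S_A0].
  move=> _ _ [f [Sf fJ] <-] [g [Sg gJ] <-]; exists (fun i => f i - g i); last exact: phiB.
  by split=> [|i Ji]; [exact: S_AB | rewrite fJ ?gJ ?subr0].
apply: subset_trans (gen_subgroup_min K_subgroup _) _.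
  move=> _ [[a Aa <-] aJ]; exists (unit_vector A a) => //; split=> [|i Ji].
    exact: S_A_unit_vector.
  rewrite /unit_vector; case: eqP => // ia.
  by case: aJ; exists i; rewrite // ia.
by move=> _ [f [Sf fJ] <-]; apply: JU => // i Ji; rewrite fJ.
Qed.

Lemma unit_vector_image_infinite (psi : G -> prodA A) :
  (forall f, S_A A f -> psi (phi f) = f) -> A `<=` ~` [set 0] -> infinite_set A ->
  infinite_set [set phi (unit_vector A a) | a in A].
Proof.
move=> phiK A0; apply: infinite_image_inj => a a' /[!inE] Aa Aa'.
have [Sa Sa'] := conj (S_A_unit_vector Aa) (S_A_unit_vector Aa').
move=> /(congr1 psi); rewrite !phiK //.
move=> /(congr1 (fun f => f (exist _ a Aa))); rewrite unit_vectorE /unit_vector /=.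
by case: eqP => // _ a0; case: (A0 _ Aa a0).
Qed.

End Converse.

Theorem corollary5p6 (G : topologicalZmodType) :
  hausdorff_space G ->
  (forall a : G, discrete_subspace (cyclic_subgroup a)) ->
  ((exists A : set G, infinite_set A /\ abs_cauchy_summable A) <->
   (exists A : set G, [/\ infinite_set A, A `<=` ~` [set 0] &
                          contains_top_iso_copy_of_S_A A])).
Proof.
move=> _ cyclic_discrete; split.
- move=> [B [B_infinite B_acs]].
  have [b [b_inj bB b_neq0 b_indep]] :=
    exists_independent_sequence (fun x _ => cyclic_discrete x) B_infinite B_acs.
  exists (range b); split.
  + by apply: infinite_image_inj infinite_nat => i j _ _ /b_inj.
  + by move=> _ [j _ <-] /eqP; apply/negP.
  + apply: S_A_range_embedding => //; exact: abs_cauchy_summable_small_tails B_acs.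
- move=> [A [A_infinite A0 [phi [psi [phiB phiK phi_cont _]]]]].
  exists [set phi (unit_vector A a) | a in A]; split.
  + exact: unit_vector_image_infinite phiK A0 A_infinite.
  + exact: unit_vector_image_acs.
Qed.
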